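(* Let $n\ge3$, $\emptyset\ne S\subseteq\{1,\dots,n-1\}$, $\mathfrak p\mathfrak p_n:=\sum_{i\in S}\mathfrak p_i\mathfrak p_n$. Then $$(1+\mathfrak p\mathfrak p_n)^*\cap(1+\mathfrak a_{n,s})^*=\begin{cases}\big(1+\sum_{|I|=s,\ I\in\mathcal J(\mathfrak p)}\mathfrak p_I\big)^*,& s=2,\dots,n-1,\\ (1+F_n)^*,& s=n.\end{cases}$$ In particular $(1+\mathfrak p\mathfrak p_n)^*\cap(1+\mathfrak a_{n,1})^*=(1+\mathfrak p\mathfrak p_n)^*\cap(1+\mathfrak a_{n,2})^*=(1+\mathfrak p\mathfrak p_n)^*$.
   Context: $K$ is a field. $\mathbb S_n$: $K$-algebra generated by $x_1,\dots,x_n,y_1,\dots,y_n$ with relations $y_ix_i=1$, $[x_i,y_j]=[x_i,x_j]=[y_i,y_j]=0$ ($i\ne j$). $e_i:=1-x_iy_i$; $\mathfrak p_i$ = ideal of $\mathbb S_n$ generated by $e_i$; $\mathfrak p_I:=\prod_{i\in I}\mathfrak p_i$; $\mathfrak a_{n,s}:=\sum_{|I|=s}\mathfrak p_I$; $F_n:=\mathfrak p_{\{1,\dots,n\}}$. $(1+\mathfrak b)^*$ = group of units of $\mathbb S_n$ lying in $1+\mathfrak b$. $\mathcal J(\mathfrak p):=\{J\subseteq\{1,\dots,n\}: n\in J,\ J\cap S\ne\emptyset\}$. *)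

From HB Require Import structures.
From mathcomp Require Import all_boot all_order all_algebra.
Set Implicit Arguments. Unset Strict Implicit. Unset Printing Implicit Defensive.
Import GRing.Theory.
Local Open Scope ring_scope.

(* Conventions: generators are indexed 0-based, x i, y i for i < n
   (paper's index k corresponds to k-1 here; paper's index n is n.-1). *)

Section Jacobson.
Variables (K : fieldType) (n : nat) (A : algType K).

Definition alg_hom (B : algType K) (f : A -> B) : Prop :=
  (forall a b, f (a + b) = f a + f b) /\ (forall a b, f (a * b) = f a * f b) /\
  f 1 = 1 /\ (forall (k : K) a, f (k *: a) = k *: f a).

End Jacobson.

Definition Sn_rels (K : fieldType) (n : nat) (B : algType K) (x y : nat -> B) : Prop :=
  (forall i, (i < n)%N -> y i * x i = 1) /\
  (forall i j, (i < n)%N -> (j < n)%N -> i != j ->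
     x i * y j = y j * x i /\ x i * x j = x j * x i /\ y i * y j = y j * y i).

(* (A, x, y) is the K-algebra presented by generators x_i, y_i and the
   relations of S_n, i.e. it satisfies the universal property. *)
Definition is_Sn (K : fieldType) (n : nat) (A : algType K) (x y : nat -> A) : Prop :=
  Sn_rels n x y /\
  forall (B : algType K) (a b : nat -> B), Sn_rels n a b ->
    (exists f : A -> B, alg_hom f /\
        forall i, (i < n)%N -> f (x i) = a i /\ f (y i) = b i) /\
    (forall f g : A -> B, alg_hom f -> alg_hom g ->
        (forall i, (i < n)%N -> f (x i) = g (x i) /\ f (y i) = g (y i)) ->
        forall z, f z = g z).

Definition ideal_gen (R : nzRingType) (P : R -> Prop) : R -> Prop :=
  fun z => exists l : seq (R * R * R),
    (forall t, t \in l -> P t.1.2) /\ z = \sum_(t <- l) t.1.1 * t.1.2 * t.2.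

Definition ideal_mul (R : nzRingType) (P Q : R -> Prop) : R -> Prop :=
  ideal_gen (fun z => exists a b, P a /\ Q b /\ z = a * b).

Definition is_unit (R : nzRingType) (u : R) : Prop :=
  exists v, u * v = 1 /\ v * u = 1.

Definition units1 (R : nzRingType) (b : R -> Prop) : R -> Prop :=
  fun u => is_unit u /\ b (u - 1).

Definition ideal_cap (R : nzRingType) (P Q : R -> Prop) : R -> Prop :=
  fun z => P z /\ Q z.

Section Ideals.
Variables (K : fieldType) (n : nat) (A : algType K) (x y : nat -> A).

Definition e_ (i : nat) : A := 1 - x i * y i.

Definition p_ (i : nat) : A -> Prop := ideal_gen (fun z => z = e_ i).

(* p_I = prod_{i in I} p_i (taken in increasing order of indices; the whole
   ring for I empty) *)
Definition pI (I : {set 'I_n}) : A -> Prop :=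
  foldr (fun i acc => ideal_mul (p_ i) acc) (ideal_gen (fun z => z = 1))
        (map val (enum I)).

Definition a_ns (s : nat) : A -> Prop :=
  ideal_gen (fun z => exists I : {set 'I_n}, #|I| = s /\ pI I z).

Definition F_n : A -> Prop := pI [set: 'I_n].

Definition ppn (S : {set 'I_n}) : A -> Prop :=
  ideal_gen (fun z => exists i : 'I_n, i \in S /\ ideal_mul (p_ i) (p_ n.-1) z).

End Ideals.

Definition Jp (n : nat) (S J : {set 'I_n}) : Prop :=
  (exists j : 'I_n, j \in J /\ val j = n.-1) /\ (exists j : 'I_n, j \in J /\ j \in S).

Definition a_ns_J (K : fieldType) (n : nat) (A : algType K) (x y : nat -> A)
    (S : {set 'I_n}) (s : nat) : A -> Prop :=
  ideal_gen (fun z => exists I : {set 'I_n}, #|I| = s /\ Jp S I /\ pI x y I z).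

From HB Require Import structures.
From mathcomp Require Import all_boot all_order all_algebra.
From mathcomp Require Import boolp.
Set Implicit Arguments. Unset Strict Implicit. Unset Printing Implicit Defensive.
Import GRing.Theory.
Local Open Scope ring_scope.

(* In S_n, large powers of y_k kill any given element of p_k, so with
   q_k := x_k^N y_k^N (N large) we have q_k z = 0 while 1 - q_k lies in p_k;
   hence z = (1 - q_k) z for z in p_k.  This gives p_I = cap_{i in I} p_i,
   and shows that h := (1 - prod_{j in S} q_j) (1 - q_n), an element of pp_n,
   satisfies h z = z for z in pp_n.  An element z of pp_n cap a_{n,s} is
   therefore h z, a sum of elements of p_j cap p_n cap p_I with j in S and
   |I| = s; for s >= 2 each of these lies in p_I' for some I' in J(p) with
   |I'| = s, namely any I' of size s between {j, n} and I cup {j, n}.  The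
   statements on unit groups are the corresponding identities of ideals. *)

(* Indexed by the closedness proof, so that the subalgebra structure can be
   declared as an instance on it. *)
Definition subalg_of (R : nzRingType) (A : algType R) (S : {pred A})
  (_ : GRing.subsemialg_closed S) := {u : A | u \in S}.

Section SubalgOf.
Variables (R : nzRingType) (A : algType R) (S : {pred A}).
Variable Sclosed : GRing.subsemialg_closed S.
HB.instance Definition _ := [isSub of subalg_of Sclosed for (@sval A (fun u => u \in S))].
HB.instance Definition _ := [Choice of subalg_of Sclosed by <:].
HB.instance Definition _ := GRing.SubChoice_isSubAlgebra.Build R A S (subalg_of Sclosed) Sclosed.
End SubalgOf.

Section SnInduction.
Variables (K : fieldType) (n : nat) (A : algType K) (x y : nat -> A).
Hypothesis HA : is_Sn n x y.

(* The universal property retracts [A] onto the subalgebra of elements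
   satisfying [P]. *)
Lemma Sn_ind (P : A -> Prop) : P 1 ->
  (forall a b, P a -> P b -> P (a + b)) -> (forall (k : K) a, P a -> P (k *: a)) ->
  (forall a b, P a -> P b -> P (a * b)) ->
  (forall i, (i < n)%N -> P (x i)) -> (forall i, (i < n)%N -> P (y i)) ->
  forall z, P z.
Proof.
move=> P1 PD PZ PM Px Py.
pose S : {pred A} := fun u => `[< P u >].
have Sclosed : GRing.subsemialg_closed S.
  have P0 : P 0 by rewrite -(scale0r 1); apply: PZ.
  split; rewrite /in_mem /= /S; first exact/asboolP.
  - by split; [apply/asboolP | move=> a b /asboolP ? /asboolP ?; apply/asboolP; auto].
  - by move=> k a; rewrite /in_mem /= => /asboolP ?; apply/asboolP; auto.
  - by move=> a b; rewrite /in_mem /= => /asboolP ? /asboolP ?; apply/asboolP; auto.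
pose T := subalg_of Sclosed.
pose a i : T := insubd 1 (x i).
pose b i : T := insubd 1 (y i).
have val_a i : (i < n)%N -> val (a i) = x i.
  by move=> hi; apply: insubdK; apply/asboolP; apply: Px.
have val_b i : (i < n)%N -> val (b i) = y i.
  by move=> hi; apply: insubdK; apply/asboolP; apply: Py.
case: HA => [[yx1 comm] univ].
have rels : Sn_rels n a b.
  split=> [i hi | i j hi hj hij]; first by apply: val_inj; rewrite /= val_a // val_b // yx1.
  have [c1 [c2 c3]] := comm i j hi hj hij.
  by split; [|split]; apply: val_inj; rewrite /= ?val_a ?val_b.
have [[f [hom_f fxy]] _] := univ T a b rels.
have val_f : alg_hom (fun z => val (f z)).
  case: hom_f => [fD [fM [f1 fZ]]]; split; [|split; [|split]].
  - by move=> u v; rewrite fD raddfD.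
  - by move=> u v; rewrite fM rmorphM.
  - by rewrite f1 rmorph1.
  - by move=> k u; rewrite fZ linearZ.
have val_fK z : val (f z) = z.
  have [_ uniq] := univ A x y (conj yx1 comm).
  apply: (uniq _ _ val_f) => // i hi; have [-> ->] := fxy i hi.
  by rewrite val_a ?val_b.
by move=> z; rewrite -(val_fK z); apply/asboolP; exact: (valP (f z)).
Qed.
End SnInduction.

Section Ideals.
Variable R : nzRingType.

Record is_ideal (Q : R -> Prop) : Prop := IsIdeal {
  ideal0 : Q 0;
  idealD : forall a b, Q a -> Q b -> Q (a + b);
  idealMl : forall a b, Q b -> Q (a * b);
  idealMr : forall a b, Q a -> Q (a * b) }.

Lemma ideal_gen_ideal (P : R -> Prop) : is_ideal (ideal_gen P).
Proof.
split.
- by exists [::]; rewrite big_nil.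
- move=> a b [l1 [h1 ->]] [l2 [h2 ->]]; exists (l1 ++ l2); rewrite big_cat; split => //.
  by move=> t; rewrite mem_cat => /orP [] ?; auto.
- move=> a b [l [h ->]]; exists (map (fun t => (a * t.1.1, t.1.2, t.2)) l); split.
  + by move=> t /mapP [t' ht' ->] /=; apply: h.
  + by rewrite big_map mulr_sumr; apply: eq_bigr => t _ /=; rewrite !mulrA.
- move=> a b [l [h ->]]; exists (map (fun t => (t.1.1, t.1.2, t.2 * b)) l); split.
  + by move=> t /mapP [t' ht' ->] /=; apply: h.
  + by rewrite big_map mulr_suml; apply: eq_bigr => t _ /=; rewrite !mulrA.
Qed.

Lemma ideal_gen_in (P : R -> Prop) z : P z -> ideal_gen P z.
Proof.
move=> Pz; exists [:: (1, z, 1)]; split; first by move=> t; rewrite inE => /eqP ->.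
by rewrite big_seq1 /= mul1r mulr1.
Qed.

Lemma ideal_gen_ind (P Q : R -> Prop) : Q 0 -> (forall a b, Q a -> Q b -> Q (a + b)) ->
  (forall a g b, P g -> Q (a * g * b)) -> forall z, ideal_gen P z -> Q z.
Proof.
move=> Q0 QD QP z [l [Pl ->]]; elim: l Pl => [|t l IH] Pl; first by rewrite big_nil.
rewrite big_cons; apply: QD; first by apply: QP; apply: Pl; rewrite inE eqxx.
by apply: IH => t' ht'; apply: Pl; rewrite inE ht' orbT.
Qed.

Lemma ideal_gen_sub (P Q : R -> Prop) : is_ideal Q -> (forall z, P z -> Q z) ->
  forall z, ideal_gen P z -> Q z.
Proof.
move=> [Q0 QD QMl QMr] PQ; apply: ideal_gen_ind => // a g b Pg.
by apply: QMr; apply: QMl; apply: PQ.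
Qed.

Lemma ideal_gen_mono (P Q : R -> Prop) : (forall z, P z -> Q z) ->
  forall z, ideal_gen P z -> ideal_gen Q z.
Proof.
move=> PQ; apply: ideal_gen_sub; first exact: ideal_gen_ideal.
by move=> z /PQ; apply: ideal_gen_in.
Qed.

Lemma ideal_mul_subl (P Q : R -> Prop) : is_ideal P -> forall z, ideal_mul P Q z -> P z.
Proof. by move=> idP; apply: ideal_gen_sub => // z [a [b [Pa [_ ->]]]]; apply: idealMr. Qed.

Lemma ideal_mul_subr (P Q : R -> Prop) : is_ideal Q -> forall z, ideal_mul P Q z -> Q z.
Proof. by move=> idQ; apply: ideal_gen_sub => // z [a [b [_ [Qb ->]]]]; apply: idealMl. Qed.

Lemma units1_cap (P Q T : R -> Prop) : (forall z, P z /\ Q z <-> T z) ->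
  forall u, ideal_cap (units1 P) (units1 Q) u <-> units1 T u.
Proof.
move=> PQT u; split; first by move=> [[Uu Pu] [_ Qu]]; split => //; apply/PQT.
by move=> [Uu /PQT [Pu Qu]].
Qed.

Lemma prod_mulr_eq0 (I : eqType) (r : seq I) (F : I -> R) (i0 : I) w :
  i0 \in r -> (forall i, i \in r -> i != i0 -> GRing.comm (F i) (F i0)) ->
  F i0 * w = 0 -> (\prod_(i <- r) F i) * w = 0.
Proof.
elim: r => [|i r IH] //; rewrite inE big_cons => i0_r commF Fw.
have {}commF j : j \in r -> j != i0 -> GRing.comm (F j) (F i0).
  by move=> jr; apply: commF; rewrite inE jr orbT.
case: (boolP (i0 \in r)) => i0r; first by rewrite -mulrA IH // mulr0.
move: i0_r; rewrite (negbTE i0r) orbF => /eqP ei0; subst i0.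
have cF : GRing.comm (F i) (\prod_(j <- r) F j).
  rewrite big_seq; apply: commr_prod => j jr; apply: commr_sym; apply: commF => //.
  by apply: contraNneq i0r => <-.
by rewrite cF -mulrA Fw mulr0.
Qed.
End Ideals.

Lemma exists_card_between (T : finType) (L U : {set T}) m :
  L \subset U -> (#|L| <= m <= #|U|)%N ->
  exists C : {set T}, [/\ L \subset C, C \subset U & #|C| = m].
Proof.
move=> LU; elim: m => [|m IH] /andP [Lm mU].
  by exists L; split => //; apply/eqP; rewrite -leqn0.
move: Lm; rewrite leq_eqVlt ltnS => /orP [/eqP <-|Lm]; first by exists L.
have /IH [C [LC CU Cm]] : (#|L| <= m <= #|U|)%N by rewrite Lm ltnW.
have : C \proper U by rewrite properEcard CU Cm.
case/properP => _ [a aU aC]; exists (a |: C); split.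
- exact: subset_trans LC (subsetUr _ _).
- by rewrite subUset sub1set aU.
- by rewrite cardsU1 aC Cm.
Qed.

Section SnIdeals.
Variables (K : fieldType) (n : nat) (A : algType K) (x y : nat -> A).
Hypothesis HA : is_Sn n x y.

Lemma Sn_yx i : (i < n)%N -> y i * x i = 1.
Proof. by case: HA => [[yx _] _]; apply: yx. Qed.

Lemma Sn_comm i j : (i < n)%N -> (j < n)%N -> i != j ->
  x i * y j = y j * x i /\ x i * x j = x j * x i /\ y i * y j = y j * y i.
Proof. by case: HA => [[_ comm] _]; apply: comm. Qed.

Lemma p_ideal k : is_ideal (p_ x y k).
Proof. exact: ideal_gen_ideal. Qed.

Lemma y_e k : (k < n)%N -> y k * e_ x y k = 0.
Proof. by move=> kn; rewrite /e_ mulrBr mulr1 mulrA Sn_yx // mul1r subrr. Qed.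

(* A power of [y k] can be pushed past any element, losing boundedly many
   factors; together with [y k * e_ k = 0] this makes large powers of [y k]
   kill every element of [p_ k]. *)
Lemma ypow_shift k : (k < n)%N -> forall u, exists N, forall M, exists w,
  y k ^+ (M + N) * u = w * y k ^+ M.
Proof.
move=> kn; apply: (Sn_ind HA).
- by exists 0%N => M; exists 1; rewrite addn0 mulr1 mul1r.
- move=> a b [N1 h1] [N2 h2]; exists (N1 + N2)%N => M.
  have [w1 e1] := h1 (M + N2)%N; have [w2 e2] := h2 (M + N1)%N.
  exists (w1 * y k ^+ N2 + w2 * y k ^+ N1); rewrite mulrDr mulrDl.
  rewrite {1}(addnC N1) addnA e1 addnA e2 -!mulrA -!exprD.
  by rewrite (addnC N2) (addnC N1).
- move=> c a [N h]; exists N => M; have [w e] := h M; exists (c *: w).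
  by rewrite -scalerAr e scalerAl.
- move=> a b [N1 h1] [N2 h2]; exists (N1 + N2)%N => M.
  have [w1 e1] := h1 (M + N2)%N; have [w2 e2] := h2 M.
  exists (w1 * w2); rewrite mulrA (addnC N1) addnA e1.
  by rewrite -mulrA e2 mulrA.
- move=> i iN; case: (eqVneq i k) => [->|ik].
  + by exists 1%N => M; exists 1; rewrite addn1 exprSr -mulrA Sn_yx // mulr1 mul1r.
  + exists 0%N => M; exists (x i); rewrite addn0; apply/esym/commrX.
    by have [c _] := Sn_comm iN kn ik.
- move=> i iN; exists 0%N => M; exists (y i); rewrite addn0; apply/esym/commrX.
  case: (eqVneq i k) => [->|ik] //.
  by have [_ [_ c]] := Sn_comm iN kn ik.
Qed.

Lemma ypow_p_eq0 k : (k < n)%N -> forall z, p_ x y k z ->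
  exists N0, forall N, (N0 <= N)%N -> y k ^+ N * z = 0.
Proof.
move=> kn; apply: ideal_gen_ind.
- by exists 0%N => N _; rewrite mulr0.
- move=> a b [N1 h1] [N2 h2]; exists (maxn N1 N2) => N; rewrite geq_max => /andP [N1N N2N].
  by rewrite mulrDr h1 // h2 // addr0.
- move=> a g b ->; have [N h] := ypow_shift kn a; have [w yaw] := h 1%N.
  exists (1 + N)%N => M NM; rewrite -(subnK NM) exprD -!mulrA.
  rewrite (mulrA (y k ^+ (1 + N))) yaw expr1 -(mulrA w) (mulrA (y k)) y_e //.
  by rewrite mul0r !mulr0.
Qed.

Definition xypow k N := x k ^+ N * y k ^+ N.

Lemma one_sub_xypow_in_p k N : p_ x y k (1 - xypow k N).
Proof.
have [p0 pD pMl pMr] := p_ideal k.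
elim: N => [|N IH]; first by rewrite /xypow !expr0 mulr1 subrr.
have -> : 1 - xypow k N.+1 = (1 - xypow k N) + x k ^+ N * e_ x y k * y k ^+ N.
  rewrite /xypow /e_ mulrBr mulr1 mulrBl (mulrA _ (x k)) -exprSr -(mulrA _ (y k)) -exprS.
  by rewrite addrA subrK.
by apply: pD => //; apply: pMr; apply: pMl; apply: ideal_gen_in.
Qed.

Lemma xypow_p_eq0 k : (k < n)%N -> forall z, p_ x y k z ->
  exists N0, forall N, (N0 <= N)%N -> xypow k N * z = 0.
Proof.
move=> kn z pz; have [N0 h] := ypow_p_eq0 kn pz; exists N0 => N N0N.
by rewrite /xypow -mulrA h // mulr0.
Qed.

Lemma p_cap_sub_mul k (Q : A -> Prop) : (k < n)%N -> forall z, p_ x y k z -> Q z ->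
  ideal_mul (p_ x y k) Q z.
Proof.
move=> kn z pz Qz; have [N0 h] := xypow_p_eq0 kn pz.
apply: ideal_gen_in; exists (1 - xypow k N0), z; split; first exact: one_sub_xypow_in_p.
by split=> //; rewrite mulrBl mul1r h // subr0.
Qed.

Lemma xypow_comm j k N M : (j < n)%N -> (k < n)%N -> j != k ->
  GRing.comm (xypow j N) (xypow k M).
Proof.
move=> jn kn jk; have [c1 [c2 c3]] := Sn_comm jn kn jk.
have kj : k != j by rewrite eq_sym.
have [d1 _] := Sn_comm kn jn kj.
apply: commr_sym; apply: commrM; apply: commrX; apply: commr_sym;
  apply: commrM; apply: commrX; rewrite /GRing.comm //.
Qed.

Definition pseq (ks : seq nat) : A -> Prop :=
  foldr (fun i acc => ideal_mul (p_ x y i) acc) (ideal_gen (fun z => z = 1)) ks.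

Lemma pseq_ideal ks : is_ideal (pseq ks).
Proof. by case: ks => [|k ks]; apply: ideal_gen_ideal. Qed.

Lemma pseq_cap ks : all (fun k => k < n)%N ks -> forall z,
  pseq ks z <-> (forall k, k \in ks -> p_ x y k z).
Proof.
elim: ks => [|k ks IH] /= ksn z.
  split => // _; rewrite -(mul1r z); apply: idealMr; first exact: ideal_gen_ideal.
  exact: ideal_gen_in.
case/andP: ksn => kn ksn; split.
- move=> h k'; rewrite inE => /orP [/eqP ->|k'ks].
  + exact: ideal_mul_subl (p_ideal k) _ h.
  + by move: k' k'ks; apply/(IH ksn z); apply: ideal_mul_subr (pseq_ideal ks) _ h.
- move=> h; apply: p_cap_sub_mul => //; first by apply: h; rewrite inE eqxx.
  by apply/(IH ksn z) => k' k'ks; apply: h; rewrite inE k'ks orbT.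
Qed.

Lemma pI_ideal (I : {set 'I_n}) : is_ideal (pI x y I).
Proof. exact: pseq_ideal. Qed.

Lemma pI_cap (I : {set 'I_n}) z : pI x y I z <-> (forall i : 'I_n, i \in I -> p_ x y i z).
Proof.
have In : all (fun k => k < n)%N (map val (enum I)).
  by apply/allP => k /mapP [i _ ->]; exact: ltn_ord.
rewrite /pI -/(pseq _) (pseq_cap In); split.
- by move=> h i iI; apply: h; apply: map_f; rewrite mem_enum.
- by move=> h k /mapP [i iI ->]; apply: h; rewrite -mem_enum.
Qed.
End SnIdeals.

Section PpnIdeals.
Variables (K : fieldType) (n : nat) (A : algType K) (x y : nat -> A).
Hypothesis HA : is_Sn n x y.
Hypothesis n_gt0 : (0 < n)%N.
Variable S : {set 'I_n}.
Hypothesis S_last : forall i, i \in S -> (val i < n.-1)%N.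

Lemma pred_ltn : (n.-1 < n)%N.
Proof. by rewrite ltn_predL. Qed.

Definition last_ord : 'I_n := Ordinal pred_ltn.

Lemma S_neq_last j : j \in S -> j != last_ord.
Proof. by move=> jS; apply/eqP => jl; have := S_last jS; rewrite jl ltnn. Qed.

Lemma ppn_in (j : 'I_n) z : j \in S -> p_ x y j z -> p_ x y n.-1 z -> ppn x y S z.
Proof.
move=> jS pj pl; apply: ideal_gen_in; exists j; split => //.
exact: (p_cap_sub_mul HA (ltn_ord j) pj pl).
Qed.

Lemma ppn_ind (Q : A -> Prop) : Q 0 -> (forall a b, Q a -> Q b -> Q (a + b)) ->
  (forall j : 'I_n, j \in S -> forall w, p_ x y j w -> p_ x y n.-1 w -> Q w) ->
  forall z, ppn x y S z -> Q z.
Proof.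
move=> Q0 QD Qcap; apply: ideal_gen_ind => // a g b [j [jS pjl]].
have pM k : p_ x y k g -> p_ x y k (a * g * b).
  by move=> pg; apply: (idealMr (p_ideal x y k)); apply: (idealMl (p_ideal x y k)).
apply: (Qcap j jS); apply: pM.
- exact: ideal_mul_subl (p_ideal x y j) _ pjl.
- exact: ideal_mul_subr (p_ideal x y n.-1) _ pjl.
Qed.

Lemma a_ns_ind s (Q : A -> Prop) : Q 0 -> (forall a b, Q a -> Q b -> Q (a + b)) ->
  (forall I : {set 'I_n}, #|I| = s -> forall w, pI x y I w -> Q w) ->
  forall z, a_ns n x y s z -> Q z.
Proof.
move=> Q0 QD QI; apply: ideal_gen_ind => // a g b [I [Is pg]].
apply: (QI I Is); apply: (idealMr (pI_ideal x y I)); exact: (idealMl (pI_ideal x y I)).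
Qed.

Lemma ppn_ideal : is_ideal (ppn x y S).
Proof. exact: ideal_gen_ideal. Qed.

Lemma ppn_sub (Q : A -> Prop) : is_ideal Q ->
  (forall j : 'I_n, j \in S -> forall w, p_ x y j w -> p_ x y n.-1 w -> Q w) ->
  forall z, ppn x y S z -> Q z.
Proof. by move=> [Q0 QD _ _]; apply: ppn_ind. Qed.

Lemma ppn_sub_a_ns1 z : ppn x y S z -> a_ns n x y 1 z.
Proof.
apply: ppn_sub; first exact: ideal_gen_ideal.
move=> j jS w pj pl; apply: ideal_gen_in; exists [set j]; split; first exact: cards1.
by apply/(pI_cap HA) => i; rewrite inE => /eqP ->.
Qed.

Lemma ppn_sub_a_ns2 z : ppn x y S z -> a_ns n x y 2 z.
Proof.
apply: ppn_sub; first exact: ideal_gen_ideal.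
move=> j jS w pj pl; apply: ideal_gen_in; exists [set j; last_ord].
split; first by rewrite cards2 S_neq_last.
by apply/(pI_cap HA) => i; rewrite !inE => /orP [] /eqP ->.
Qed.

Lemma F_n_sub_ppn z : S != set0 -> F_n n x y z -> ppn x y S z.
Proof.
case/set0Pn => j jS /(pI_cap HA) pz.
by apply: (ppn_in jS); [apply: pz; rewrite inE | apply: (pz last_ord); rewrite inE].
Qed.

Lemma a_nn_F_n z : a_ns n x y n z <-> F_n n x y z.
Proof.
split; last first.
  by move=> Fz; apply: ideal_gen_in; exists [set: 'I_n]; rewrite cardsT card_ord.
apply: ideal_gen_sub; first exact: pI_ideal.
move=> w [I [In pw]]; rewrite /F_n; suff -> : [set: 'I_n] = I by [].
by apply/eqP; rewrite eq_sym eqEcard subsetT cardsT card_ord In leqnn.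
Qed.

Definition ppn_unit N :=
  (1 - \prod_(j <- enum S) xypow x y j N) * (1 - xypow x y n.-1 N).

Lemma ppn_unit_in N : ppn x y S (ppn_unit N).
Proof.
have [p0 pD pMl _] := ppn_ideal.
rewrite /ppn_unit; have : all (mem S) (enum S) by apply/allP => j; rewrite mem_enum.
elim: (enum S) => [|j js IH] /=; first by rewrite big_nil subrr mul0r.
case/andP => jS jsS; rewrite big_cons.
have -> : 1 - xypow x y j N * \prod_(i <- js) xypow x y i N =
    (1 - xypow x y j N) + xypow x y j N * (1 - \prod_(i <- js) xypow x y i N).
  by rewrite mulrBr mulr1 addrA subrK.
rewrite mulrDl -mulrA; apply: pD; last exact/pMl/IH.
apply: (ppn_in jS); first by apply: idealMr; [apply: p_ideal | apply: one_sub_xypow_in_p].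
by apply: idealMl; [apply: p_ideal | apply: one_sub_xypow_in_p].
Qed.

Lemma ppn_unit_fixes z : ppn x y S z ->
  exists N0, forall N, (N0 <= N)%N -> ppn_unit N * z = z.
Proof.
move: z; apply: ppn_ind.
- by exists 0%N => N _; rewrite mulr0.
- move=> a b [N1 h1] [N2 h2]; exists (maxn N1 N2) => N; rewrite geq_max => /andP [N1N N2N].
  by rewrite mulrDr h1 // h2.
- move=> j jS w pj pl.
  have [N1 kj] := xypow_p_eq0 HA (ltn_ord j) pj; have [N2 kl] := xypow_p_eq0 HA pred_ltn pl.
  exists (maxn N1 N2) => N; rewrite geq_max => /andP [N1N N2N].
  have kS : (\prod_(i <- enum S) xypow x y i N) * w = 0.
    apply: (prod_mulr_eq0 (i0 := j)); [by rewrite mem_enum | | exact: kj].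
    by move=> i _ ij; apply: (xypow_comm HA); rewrite ?ltn_ord.
  have fixl : (1 - xypow x y n.-1 N) * w = w by rewrite mulrBl mul1r kl // subr0.
  by rewrite /ppn_unit -mulrA fixl mulrBl mul1r kS subr0.
Qed.

Lemma cap_sub_a_ns_J s (j : 'I_n) (I : {set 'I_n}) z : (2 <= s)%N -> #|I| = s ->
  j \in S -> p_ x y j z -> p_ x y n.-1 z -> pI x y I z -> a_ns_J x y S s z.
Proof.
move=> s2 Is jS pj pl /(pI_cap HA) pIz.
pose jl := [set j; last_ord].
have jls : (#|jl| <= s <= #|I :|: jl|)%N.
  rewrite cards2 S_neq_last //= s2 -Is; exact: subset_leq_card (subsetUl _ _).
have [I' [jlI' I'I I's]] := exists_card_between (subsetUr I jl) jls.
have jl_I' : j \in I' /\ last_ord \in I' by split; apply: (subsetP jlI'); rewrite !inE eqxx ?orbT.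
apply: ideal_gen_in; exists I'; split => //; split.
  by split; [exists last_ord | exists j]; case: jl_I'.
apply/(pI_cap HA) => i /(subsetP I'I); rewrite !inE => /orP [/pIz //|/orP [] /eqP -> //].
Qed.

Lemma mul_ppn_a_ns s h w : (2 <= s)%N -> ppn x y S h -> a_ns n x y s w ->
  a_ns_J x y S s (h * w).
Proof.
move=> s2; have [J0 JD _ _] := ideal_gen_ideal
  (fun z => exists I : {set 'I_n}, #|I| = s /\ Jp S I /\ pI x y I z).
move: h; apply: (ppn_ind (Q := fun h => a_ns n x y s w -> a_ns_J x y S s (h * w))).
- by rewrite mul0r.
- by move=> a b Ha Hb aw; rewrite mulrDl; apply: JD; [apply: Ha | apply: Hb].
move=> j jS g pj pl; move: w; apply: a_ns_ind; first by rewrite mulr0.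
  by move=> a b ga gb; rewrite mulrDr; apply: JD.
move=> I Is w pw; apply: (cap_sub_a_ns_J s2 Is jS).
- exact: (idealMr (p_ideal x y j)).
- exact: (idealMr (p_ideal x y n.-1)).
- exact: (idealMl (pI_ideal x y I)).
Qed.

Lemma ppn_cap_a_ns s z : (2 <= s)%N ->
  ppn x y S z /\ a_ns n x y s z <-> a_ns_J x y S s z.
Proof.
move=> s2; split.
  case=> ppz az; have [N0 fixz] := ppn_unit_fixes ppz.
  by rewrite -(fixz N0) //; apply: mul_ppn_a_ns => //; apply: ppn_unit_in.
move=> Jz; split.
- move: Jz; apply: ideal_gen_sub; first exact: ppn_ideal.
  move=> v [I [_ [[[l [lI ln]] [j [jI jS]]] /(pI_cap HA) pv]]].
  by apply: (ppn_in jS (pv j jI)); rewrite -ln; apply: pv.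
- by move: Jz; apply: ideal_gen_mono => v [I [Is [_ pv]]]; exists I.
Qed.
End PpnIdeals.

Theorem lemma5p1 (K : fieldType) (n : nat) (A : algType K) (x y : nat -> A)
  (HA : is_Sn n x y) (hn : (3 <= n)%N)
  (S : {set 'I_n}) (hS0 : S != set0) (hS : forall i, i \in S -> (val i < n.-1)%N) :
  (forall s : nat, (2 <= s)%N -> (s <= n.-1)%N ->
     forall u, ideal_cap (units1 (ppn x y S)) (units1 (a_ns n x y s)) u
               <-> units1 (a_ns_J x y S s) u) /\
  (forall u, ideal_cap (units1 (ppn x y S)) (units1 (a_ns n x y n)) u
             <-> units1 (F_n n x y) u) /\
  (forall u, ideal_cap (units1 (ppn x y S)) (units1 (a_ns n x y 1)) u
             <-> units1 (ppn x y S) u) /\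
  (forall u, ideal_cap (units1 (ppn x y S)) (units1 (a_ns n x y 2)) u
             <-> units1 (ppn x y S) u).
Proof.
have n_gt0 : (0 < n)%N by apply: leq_trans hn.
split; [|split; [|split]].
- by move=> s s2 _; apply: units1_cap => z; apply: (ppn_cap_a_ns HA n_gt0 hS).
- apply: units1_cap => z; rewrite a_nn_F_n //; split; first by move=> [].
  by move=> Fz; split => //; exact: (F_n_sub_ppn HA n_gt0).
- apply: units1_cap => z; split; first by move=> [].
  by move=> ppz; split => //; exact: (ppn_sub_a_ns1 HA ppz).
- apply: units1_cap => z; split; first by move=> [].
  by move=> ppz; split => //; exact: (ppn_sub_a_ns2 HA n_gt0 hS).
Qed.
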